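(* Consider the static load balancing game with $m$ servers and $n$ players described in the context. There exists a function $\Phi$ on the set of action profiles $A_1\times\cdots\times A_n$ such that for every player $i\in[n]$ and any two action profiles $(a_i,a_{-i})$ and $(a'_i,a_{-i})$ that differ only in the action of player $i$, $$\Phi(a_i,a_{-i})-\Phi(a'_i,a_{-i})=D_i(a_i,a_{-i})-D_i(a'_i,a_{-i}),$$ i.e., the game is an exact potential game. In particular, the game admits a pure Nash equilibrium, and the best-response dynamics (players sequentially replacing their action by a best response to the current actions of the others) converge to a pure Nash equilibrium.
   Context: Static load balancing game: there are $m$ servers $[m]=\{1,\dots,m\}$ with service rates $\mu_j>0$ and initial loads $s_j^0\ge 0$, and $n$ players $[n]=\{1,\dots,n\}$; player $i$ holds a job of length $\lambda_i>0$ which it can split fractionally among servers. Player $i$'s action set is the probability simplex $A_i=\{a_i=(a_{i1},\dots,a_{im}):\sum_{j=1}^m a_{ij}=1,\ a_{ij}\ge 0\}$, where $a_{ij}$ is the fraction of job $i$ placed on server $j$. Given an action profile $a=(a_1,\dots,a_n)$, the cost of player $i$ is $$D_i(a)=\sum_{j=1}^m \lambda_i a_{ij}\left(\frac{\lambda_i a_{ij}}{2\mu_j}+\frac{s_j^0+\sum_{k\neq i}\lambda_k a_{kj}}{\mu_j}\right),$$ and each player wishes to minimize its own cost. A pure Nash equilibrium is a profile $a$ with $D_i(a_i,a_{-i})\le D_i(a_i',a_{-i})$ for all $i$ and all $a_i'\in A_i$. *)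

From HB Require Import structures.
From mathcomp Require Import all_boot all_order all_algebra.
From mathcomp Require Import all_classical all_reals topology normedtype sequences.
Set Implicit Arguments. Unset Strict Implicit. Unset Printing Implicit Defensive.
Import Order.TTheory GRing.Theory Num.Theory.
Local Open Scope ring_scope.

(* An action profile: a k j = fraction of job k placed on server j. *)
Definition profile (R : realType) (n m : nat) := 'I_n -> 'I_m -> R.

Definition in_simplex (R : realType) (m : nat) (b : 'I_m -> R) : Prop :=
  (forall j, 0 <= b j) /\ \sum_(j < m) b j = 1.

Definition feasible (R : realType) (n m : nat) (a : profile R n m) : Prop :=
  forall k, in_simplex (a k).

Definition upd (R : realType) (n m : nat) (a : profile R n m) (i : 'I_n)
  (b : 'I_m -> R) : profile R n m :=
  fun k => if k == i then b else a k.

Definition cost (R : realType) (n m : nat) (mu s0 : 'I_m -> R) (lam : 'I_n -> R)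
  (i : 'I_n) (a : profile R n m) : R :=
  \sum_(j < m) lam i * a i j *
     (lam i * a i j / (2 * mu j)
      + (s0 j + \sum_(k < n | k != i) lam k * a k j) / mu j).

Definition best_response (R : realType) (n m : nat) (mu s0 : 'I_m -> R)
  (lam : 'I_n -> R) (i : 'I_n) (a : profile R n m) (b : 'I_m -> R) : Prop :=
  in_simplex b /\
  forall b', in_simplex b' -> cost mu s0 lam i (upd a i b) <= cost mu s0 lam i (upd a i b').

Definition pure_NE (R : realType) (n m : nat) (mu s0 : 'I_m -> R)
  (lam : 'I_n -> R) (a : profile R n m) : Prop :=
  feasible a /\
  forall i (b : 'I_m -> R), in_simplex b ->
    cost mu s0 lam i a <= cost mu s0 lam i (upd a i b).

Definition exact_potential (R : realType) (n m : nat) (mu s0 : 'I_m -> R)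
  (lam : 'I_n -> R) (Phi : profile R n m -> R) : Prop :=
  forall (a : profile R n m) (i : 'I_n) (b b' : 'I_m -> R),
    feasible a -> in_simplex b -> in_simplex b' ->
    Phi (upd a i b) - Phi (upd a i b') =
    cost mu s0 lam i (upd a i b) - cost mu s0 lam i (upd a i b').

Definition BR_dynamics (R : realType) (n m : nat) (mu s0 : 'I_m -> R)
  (lam : 'I_n -> R) (sched : nat -> 'I_n) (x : nat -> profile R n m) : Prop :=
  feasible (x 0%N) /\
  (forall t, nat_of_ord (sched t) = (t %% n)%N) /\
  (forall t, exists b, best_response mu s0 lam (sched t) (x t) b /\
                       x t.+1 = upd (x t) (sched t) b).

From HB Require Import structures.
From mathcomp Require Import all_boot all_order all_algebra.
From mathcomp Require Import all_classical all_reals topology normedtype sequences.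
From mathcomp Require Import ring lra.
Import Order.TTheory GRing.Theory Num.Theory numFieldNormedType.Exports.
Local Open Scope classical_set_scope.
Local Open Scope ring_scope.

(* The potential sum_j (s0_j + sum_k lam_k a_kj)^2 / (2 mu_j) differs from the cost
   of player i by a term independent of a_i.  Against fixed loads c of the others, a
   player's cost is a strictly convex quadratic on the simplex, and b is optimal iff
   every server it uses has minimal level (lam_i b_j + c_j) / mu_j (water-filling);
   such a b exists and is unique.  A water-filling update of one player keeps every
   other water-filling player water-filling, so after the first n round-robin best
   responses all players are water-filling: the profile is a Nash equilibrium, and by
   uniqueness of best responses the dynamics stay there forever. *)

Set Implicit Arguments. Unset Strict Implicit.

Definition min_on_support (R : realType) (m : nat) (g b : 'I_m -> R) : Prop :=
  forall j, 0 < b j -> forall k, g j <= g k.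

Lemma sum_le_min_on_support (R : realType) (m : nat) (g b b' : 'I_m -> R) :
  in_simplex b -> in_simplex b' -> min_on_support g b ->
  \sum_(j < m) b j * g j <= \sum_(j < m) b' j * g j.
Proof.
move=> [b_ge0 sum_b] [b'_ge0 sum_b'] b_min.
have -> : \sum_(j < m) b j * g j = \sum_(j < m) \sum_(k < m) b j * b' k * g j.
  by apply: eq_bigr => j _; rewrite -mulr_suml -mulr_sumr sum_b' mulr1.
have -> : \sum_(k < m) b' k * g k = \sum_(k < m) \sum_(j < m) b j * b' k * g k.
  by apply: eq_bigr => k _; rewrite -!mulr_suml sum_b mul1r.
rewrite [X in _ <= X]exchange_big /=; apply: ler_sum => j _; apply: ler_sum => k _.
have [bj0|bj_neq0] := eqVneq (b j) 0; first by rewrite bj0 !mul0r.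
apply: ler_wpM2l; first by rewrite mulr_ge0.
by apply: b_min; rewrite lt_def bj_neq0 b_ge0.
Qed.

Lemma sum_two_points (R : realType) (m : nat) (F : 'I_m -> R) (k j : 'I_m) :
  k != j -> (forall p, p != k -> p != j -> F p = 0) ->
  \sum_(p < m) F p = F k + F j.
Proof.
move=> kj F0; rewrite (bigD1 k) //= (bigD1 j) 1?eq_sym //=.
by rewrite big1 ?addr0 // => p /andP[pk pj]; exact: F0.
Qed.

Section WaterFilling.

Variables (R : realType) (m : nat) (mu : 'I_m -> R) (c : 'I_m -> R) (l : R).
Hypotheses (mu_gt0 : forall j, 0 < mu j) (l_gt0 : 0 < l).

Definition own_cost (b : 'I_m -> R) : R :=
  \sum_(j < m) l * b j * (l * b j / (2 * mu j) + c j / mu j).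

Definition level (b : 'I_m -> R) (j : 'I_m) : R := (l * b j + c j) / mu j.

Definition quad_gap (b b' : 'I_m -> R) : R :=
  \sum_(j < m) l ^+ 2 * (b' j - b j) ^+ 2 / (2 * mu j).

Lemma own_costB b b' :
  own_cost b' - own_cost b =
  l * \sum_(j < m) (b' j - b j) * level b j + quad_gap b b'.
Proof.
rewrite /own_cost /quad_gap -sumrB mulr_sumr -big_split; apply: eq_bigr => j _.
by rewrite /level /=; field; exact: lt0r_neq0.
Qed.

Lemma quad_gap_term_ge0 b b' j : 0 <= l ^+ 2 * (b' j - b j) ^+ 2 / (2 * mu j).
Proof.
by rewrite divr_ge0 ?(mulr_ge0 (sqr_ge0 _) (sqr_ge0 _)) ?mulr_ge0 ?ler0n ?(ltW (mu_gt0 j)).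
Qed.

Lemma quad_gap_ge0 b b' : 0 <= quad_gap b b'.
Proof. by apply: sumr_ge0 => j _; exact: quad_gap_term_ge0. Qed.

Lemma quad_gap_eq0 b b' : quad_gap b b' = 0 -> b' = b.
Proof.
move=> gap0; apply: funext => j; apply/eqP; rewrite -subr_eq0.
have /eqP := psumr_eq0P (fun p _ => quad_gap_term_ge0 b b' p) gap0 (i := j) isT.
by rewrite !mulf_eq0 invr_eq0 mulf_eq0 (gt_eqF l_gt0) (gt_eqF (mu_gt0 j)) pnatr_eq0 /= orbb orbF.
Qed.

Lemma own_cost_min_on_support b b' :
  in_simplex b -> in_simplex b' -> min_on_support (level b) b ->
  own_cost b + quad_gap b b' <= own_cost b'.
Proof.
move=> b_simplex b'_simplex b_min.
rewrite -subr_ge0 opprD addrA own_costB addrK mulr_ge0 ?(ltW l_gt0) //.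
under eq_bigr do rewrite mulrBl.
by rewrite sumrB subr_ge0 sum_le_min_on_support.
Qed.

Lemma own_cost_min_on_support_unique b b' :
  in_simplex b -> in_simplex b' -> min_on_support (level b) b ->
  own_cost b' <= own_cost b -> b' = b.
Proof.
move=> b_simplex b'_simplex b_min le_b'b; apply: quad_gap_eq0.
have := own_cost_min_on_support b_simplex b'_simplex b_min.
have := quad_gap_ge0 b b'; lra.
Qed.

Definition transfer (b : 'I_m -> R) (j k : 'I_m) (e : R) (p : 'I_m) : R :=
  b p + (if p == k then e else if p == j then - e else 0).

Lemma transfer_simplex b j k e :
  k != j -> in_simplex b -> 0 <= e -> e <= b j -> in_simplex (transfer b j k e).
Proof.
move=> kj [b_ge0 sum_b] e_ge0 e_le; split.
  move=> p; rewrite /transfer; case: eqP => [_|_]; first by rewrite addr_ge0.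
  by case: eqP => [->|_]; rewrite ?subr_ge0 ?addr0.
rewrite big_split /= sum_b (sum_two_points kj) ?eqxx 1?eq_sym ?(negbTE kj) ?addrN ?addr0 //.
by move=> p /negbTE -> /negbTE ->.
Qed.

Lemma own_cost_transfer b j k e : k != j ->
  own_cost (transfer b j k e) - own_cost b =
  e * (e * (l ^+ 2 / (2 * mu k) + l ^+ 2 / (2 * mu j)) - l * (level b j - level b k)).
Proof.
move=> kj; have diff p : transfer b j k e p - b p =
    if p == k then e else if p == j then - e else 0.
  by rewrite /transfer addrAC subrr add0r.
have diff0 p : p != k -> p != j -> transfer b j k e p - b p = 0.
  by move=> /negbTE pk /negbTE pj; rewrite diff pk pj.
rewrite own_costB /quad_gap (sum_two_points kj); last by move=> p pk pj; rewrite diff0 ?mul0r.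
rewrite (sum_two_points kj); last by move=> p pk pj; rewrite diff0 // expr0n mulr0 mul0r.
rewrite !diff eqxx eq_sym (negbTE kj) eqxx.
by field; rewrite !gt_eqF.
Qed.

(* Moving a small mass from a used server to a server of strictly lower level
   lowers the cost to first order, while the quadratic penalty is of second order. *)
Lemma min_on_support_of_argmin b :
  in_simplex b -> (forall b', in_simplex b' -> own_cost b <= own_cost b') ->
  min_on_support (level b) b.
Proof.
move=> b_simplex b_opt j bj_gt0 k; rewrite leNgt; apply/negP => lt_kj.
have kj : k != j by apply: contraTneq lt_kj => ->; rewrite ltxx.
set K := l ^+ 2 / (2 * mu k) + l ^+ 2 / (2 * mu j).
set d := l * (level b j - level b k).
have K_gt0 : 0 < K.
  by apply: addr_gt0; rewrite divr_gt0 ?exprn_gt0 ?mulr_gt0 ?ltr0n ?mu_gt0.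
have d_gt0 : 0 < d by rewrite mulr_gt0 // subr_gt0.
pose e := Num.min (b j) (d / (2 * K)).
have e_gt0 : 0 < e.
  by rewrite lt_min bj_gt0 /=; apply: divr_gt0 => //; rewrite mulr_gt0 ?ltr0n.
have e_le : e <= b j by rewrite ge_min lexx.
have eK_le : e * K <= d / 2.
  have : e * (2 * K) <= d.
    by rewrite -ler_pdivlMr ?mulr_gt0 ?ltr0n // ge_min lexx orbT.
  lra.
have := b_opt _ (transfer_simplex kj b_simplex (ltW e_gt0) e_le).
rewrite -subr_ge0 own_cost_transfer // -/K -/d pmulr_rge0 // subr_ge0.
lra.
Qed.

Lemma sum_mu_gt0 (S : {set 'I_m}) : S != finset.set0 -> 0 < \sum_(j in S) mu j.
Proof.
case/set0Pn=> j0 j0S; rewrite (big_setD1 j0) //=.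
by rewrite ltr_wpDr ?mu_gt0 // sumr_ge0 // => j _; exact: ltW.
Qed.

(* The common level of the servers of [S] when the job is spread over exactly [S]
   so as to equalise their levels. *)
Definition fill_level (S : {set 'I_m}) : R :=
  (l + \sum_(j in S) c j) / \sum_(j in S) mu j.

Section MinimalFillLevel.

Variable S : {set 'I_m}.
Hypotheses (S_neq0 : S != finset.set0)
  (S_min : forall T, T != finset.set0 -> fill_level S <= fill_level T).

Let v := fill_level S.

Lemma fill_level_sum : v * \sum_(j in S) mu j = l + \sum_(j in S) c j.
Proof. by rewrite /v /fill_level mulfVK // gt_eqF // sum_mu_gt0. Qed.

Lemma fill_level_min_in j : j \in S -> c j <= v * mu j.
Proof.
move=> jS; have := fill_level_sum; rewrite !(big_setD1 j jS) /= mulrDr.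
have : v * \sum_(i in S :\ j) mu i <= l + \sum_(i in S :\ j) c i.
  have [->|S'_neq0] := eqVneq (S :\ j) finset.set0.
    by rewrite !big_set0 mulr0 addr0 ltW.
  by rewrite -ler_pdivlMr ?sum_mu_gt0 // S_min.
lra.
Qed.

Lemma fill_level_min_out j : j \notin S -> v * mu j <= c j.
Proof.
move=> jS; have := fill_level_sum.
have jS_neq0 : j |: S != finset.set0 by apply/set0Pn; exists j; rewrite setU11.
have := S_min jS_neq0.
rewrite -/v /fill_level !(big_setU1 j jS) /= ler_pdivlMr ?addr_gt0 ?mu_gt0 ?sum_mu_gt0 //.
rewrite mulrDr; lra.
Qed.

End MinimalFillLevel.

(* Water-filling: spread the job over a set [S] of servers of minimal fill level. *)
Lemma exists_min_on_support :
  (0 < m)%N -> exists b, in_simplex b /\ min_on_support (level b) b.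
Proof.
move=> m_gt0.
have setT_neq0 : [set: 'I_m]%SET != finset.set0 by apply/set0Pn; exists (Ordinal m_gt0).
have [S S_neq0 S_min] := arg_minP (P := fun S => S != finset.set0) fill_level setT_neq0.
set v := fill_level S.
pose b j := if j \in S then (v * mu j - c j) / l else 0.
have level_b j : level b j = if j \in S then v else c j / mu j.
  rewrite /level /b; case: ifP => _; last by rewrite mulr0 add0r.
  by field; rewrite !gt_eqF ?mu_gt0.
exists b; split; first split.
- move=> j; rewrite /b; case: ifP => // jS.
  by rewrite divr_ge0 ?subr_ge0 ?fill_level_min_in ?ltW.
- rewrite /b -big_mkcond /= -mulr_suml sumrB -mulr_sumr fill_level_sum //.
  by rewrite addrK mulfV ?gt_eqF.
- move=> j bj_gt0 k; rewrite !level_b.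
  have -> : j \in S by apply: contraTT bj_gt0; rewrite /b => /negbTE ->; rewrite ltxx.
  case: ifP => [//|/negbT kS].
  by rewrite ler_pdivlMr ?mu_gt0 // fill_level_min_out.
Qed.

End WaterFilling.

Lemma upd_same (R : realType) (n m : nat) (a : profile R n m) i b : upd a i b i = b.
Proof. by rewrite /upd eqxx. Qed.

Lemma upd_other (R : realType) (n m : nat) (a : profile R n m) i b k :
  k != i -> upd a i b k = a k.
Proof. by rewrite /upd => /negbTE ->. Qed.

Lemma upd_id (R : realType) (n m : nat) (a : profile R n m) i : upd a i (a i) = a.
Proof. by apply: funext => k; rewrite /upd; case: eqP => // ->. Qed.

Lemma feasible_upd (R : realType) (n m : nat) (a : profile R n m) i b :
  feasible a -> in_simplex b -> feasible (upd a i b).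
Proof. by move=> a_feas b_simplex k; rewrite /upd; case: eqP. Qed.

Section LoadBalancing.

Variables (R : realType) (n m : nat) (mu s0 : 'I_m -> R) (lam : 'I_n -> R).
Hypotheses (mu_gt0 : forall j, 0 < mu j) (lam_gt0 : forall i, 0 < lam i).

Definition others_load (a : profile R n m) (i : 'I_n) (j : 'I_m) : R :=
  s0 j + \sum_(k < n | k != i) lam k * a k j.

Definition server_level (a : profile R n m) (j : 'I_m) : R :=
  (s0 j + \sum_(k < n) lam k * a k j) / mu j.

Definition settled (a : profile R n m) (k : 'I_n) : Prop :=
  min_on_support (server_level a) (a k).

Definition potential (a : profile R n m) : R :=
  \sum_(j < m) (s0 j + \sum_(k < n) lam k * a k j) ^+ 2 / (2 * mu j).

Lemma others_load_upd a i b : others_load (upd a i b) i = others_load a i.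
Proof.
apply: funext => j; rewrite /others_load; congr (_ + _).
by apply: eq_bigr => k ki; rewrite upd_other.
Qed.

Lemma load_upd a i b j :
  s0 j + \sum_(k < n) lam k * upd a i b k j = lam i * b j + others_load a i j.
Proof.
rewrite /others_load (bigD1 i) //= upd_same addrCA; congr (_ + (_ + _)).
by apply: eq_bigr => k ki; rewrite upd_other.
Qed.

Lemma cost_upd a i b :
  cost mu s0 lam i (upd a i b) = own_cost mu (others_load a i) (lam i) b.
Proof.
by rewrite /cost -(others_load_upd a i b) upd_same.
Qed.

Lemma server_level_upd a i b :
  server_level (upd a i b) = level mu (others_load a i) (lam i) b.
Proof. by apply: funext => j; rewrite /server_level load_upd. Qed.

Lemma server_level_self a i :
  server_level a = level mu (others_load a i) (lam i) (a i).
Proof. by rewrite -server_level_upd upd_id. Qed.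

Lemma potential_sub_cost a i b :
  potential (upd a i b) - cost mu s0 lam i (upd a i b) =
  \sum_(j < m) others_load a i j ^+ 2 / (2 * mu j).
Proof.
rewrite cost_upd /potential /own_cost -sumrB; apply: eq_bigr => j _.
by rewrite load_upd; field; exact: lt0r_neq0.
Qed.

Lemma potential_exact : exact_potential mu s0 lam potential.
Proof.
move=> a i b b' _ _ _.
have := potential_sub_cost a i b; have := potential_sub_cost a i b'; lra.
Qed.

Lemma settled_updE a i b :
  settled (upd a i b) i = min_on_support (level mu (others_load a i) (lam i) b) b.
Proof. by rewrite /settled server_level_upd upd_same. Qed.

Lemma settledE a i :
  settled a i = min_on_support (level mu (others_load a i) (lam i) (a i)) (a i).
Proof. by rewrite -settled_updE upd_id. Qed.

Lemma server_level_updB a i b p :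
  server_level (upd a i b) p - server_level a p = lam i / mu p * (b p - a i p).
Proof.
rewrite server_level_upd (server_level_self a i) /level.
by field; exact: lt0r_neq0.
Qed.

(* If a level dropped below the level of a server used by [k], player [i] would
   have removed mass from every server it uses and from one more, losing mass. *)
Lemma settled_upd a i b k :
  in_simplex (a i) -> in_simplex b -> settled a k -> settled (upd a i b) i ->
  k != i -> settled (upd a i b) k.
Proof.
move=> [ai_ge0 sum_ai] [_ sum_b] k_settled i_settled ki.
rewrite /settled upd_same in i_settled; rewrite /settled upd_other //.
move=> j akj_gt0 q; rewrite leNgt; apply/negP => lt_qj.
have k_min := k_settled j akj_gt0.
have le_level p : (server_level (upd a i b) p <= server_level a p) = (b p <= a i p).
  by rewrite -subr_le0 server_level_updB pmulr_rle0 ?divr_gt0 // subr_le0.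
have lt_level p : (server_level (upd a i b) p < server_level a p) = (b p < a i p).
  by rewrite -subr_lt0 server_level_updB pmulr_rlt0 ?divr_gt0 // subr_lt0.
have le_j : server_level (upd a i b) j <= server_level a j.
  have [/i_settled/(_ q) le_jq|bj_le0] := ltP 0 (b j).
    by have := lt_le_trans lt_qj le_jq; rewrite ltxx.
  by rewrite le_level (le_trans bj_le0 (ai_ge0 j)).
have b_le p : b p <= a i p.
  rewrite -le_level; have [/i_settled/(_ q) le_pq|bp_le0] := ltP 0 (b p).
    exact/ltW/(le_lt_trans le_pq)/(lt_le_trans lt_qj)/(le_trans le_j (k_min p)).
  by rewrite le_level (le_trans bp_le0 (ai_ge0 p)).
have b_lt : b q < a i q.
  by rewrite -lt_level (lt_le_trans lt_qj) // (le_trans le_j (k_min q)).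
have : \sum_(p < m) b p < \sum_(p < m) a i p.
  rewrite (bigD1 q) // [X in _ < X](bigD1 q) //=.
  by apply: ltr_leD => //; exact: ler_sum.
by rewrite sum_b sum_ai ltxx.
Qed.

Lemma best_response_settled a i b :
  best_response mu s0 lam i a b -> settled (upd a i b) i.
Proof.
move=> [b_simplex b_opt]; rewrite settled_updE.
apply: min_on_support_of_argmin => // b' b'_simplex.
by rewrite -!cost_upd; exact: b_opt.
Qed.

Lemma best_response_unique a i b :
  in_simplex (a i) -> settled a i -> best_response mu s0 lam i a b -> b = a i.
Proof.
move=> ai_simplex; rewrite settledE => ai_min [b_simplex b_opt].
apply: (own_cost_min_on_support_unique mu_gt0 (lam_gt0 i) ai_simplex b_simplex ai_min).
by have := b_opt _ ai_simplex; rewrite !cost_upd.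
Qed.

Lemma settled_pure_NE a :
  feasible a -> (forall k, settled a k) -> pure_NE mu s0 lam a.
Proof.
move=> a_feas a_settled; split=> // i b b_simplex.
have := a_settled i; rewrite settledE => ai_min.
rewrite -{1}(upd_id a i) !cost_upd.
apply: le_trans (own_cost_min_on_support _ _ (a_feas i) b_simplex ai_min) => //.
by rewrite lerDl quad_gap_ge0.
Qed.

Lemma settled_prefix_upd a i b t :
  feasible a -> (forall k : 'I_n, (k < t)%N -> settled a k) -> val i = (t %% n)%N ->
  in_simplex b -> settled (upd a i b) i ->
  forall k : 'I_n, (k < t.+1)%N -> settled (upd a i b) k.
Proof.
move=> a_feas a_settled it b_simplex i_settled k le_kt.
have [-> //|ki] := eqVneq k i.
have lt_kt : (k < t)%N.
  move: le_kt; rewrite ltnS leq_eqVlt => /orP[/eqP kt|//].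
  by case/eqP: ki; apply: val_inj; rewrite /= it -kt modn_small.
exact: settled_upd (a_feas i) b_simplex (a_settled k lt_kt) i_settled ki.
Qed.

Lemma exists_settled_profile :
  (0 < m)%N -> exists a, feasible a /\ forall k, settled a k.
Proof.
move=> m_gt0.
suff /(_ n (leqnn n)) [a [a_feas a_settled]] :
    forall t, (t <= n)%N -> exists a, feasible a /\ forall k : 'I_n, (k < t)%N -> settled a k.
  by exists a; split => // k; exact/a_settled.
elim=> [_|t IH lt_tn].
  have [b0 [b0_simplex _]] := exists_min_on_support s0 mu_gt0 ltr01 m_gt0.
  by exists (fun _ => b0); split=> // k; rewrite ltn0.
have [a [a_feas a_settled]] := IH (ltnW lt_tn).
pose i := Ordinal lt_tn.
have [b [b_simplex b_min]] := exists_min_on_support (others_load a i) mu_gt0 (lam_gt0 i) m_gt0.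
exists (upd a i b); split; first exact: feasible_upd.
by apply: settled_prefix_upd => //; rewrite ?settled_updE //= modn_small.
Qed.

Section BestResponseDynamics.

Variables (sched : nat -> 'I_n) (x : nat -> profile R n m).
Hypothesis x_dyn : BR_dynamics mu s0 lam sched x.

Lemma BR_dynamics_settled t :
  feasible (x t) /\ forall k : 'I_n, (k < t)%N -> settled (x t) k.
Proof.
have [x0_feas [sched_rr x_step]] := x_dyn.
elim: t => [|t [xt_feas xt_settled]]; first by [].
have [b [b_br ->]] := x_step t.
split; first exact: feasible_upd xt_feas b_br.1.
exact: settled_prefix_upd xt_feas xt_settled (sched_rr t) b_br.1 (best_response_settled b_br).
Qed.

Lemma BR_dynamics_stationary t : (n <= t)%N -> x t = x n.
Proof.
have [_ [_ x_step]] := x_dyn.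
elim: t => [|t IH]; first by rewrite leqn0 => /eqP n0; congr x.
rewrite leq_eqVlt => /orP[/eqP nt|]; first by congr x.
rewrite ltnS => le_nt.
have [b [b_br ->]] := x_step t.
have [xt_feas xt_settled] := BR_dynamics_settled t.
have xt_settled_all k : settled (x t) k := xt_settled k (leq_trans (ltn_ord k) le_nt).
by rewrite (best_response_unique (xt_feas _) (xt_settled_all _) b_br) upd_id IH.
Qed.

End BestResponseDynamics.

End LoadBalancing.

Unset Implicit Arguments.

Theorem theorem1 (R : realType) (n m : nat) (mu s0 : 'I_m -> R) (lam : 'I_n -> R)
  (hm : (0 < m)%N)
  (hmu : forall j, 0 < mu j) (hs0 : forall j, 0 <= s0 j)
  (hlam : forall i, 0 < lam i) :
  (exists Phi : profile R n m -> R, exact_potential mu s0 lam Phi) /\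
  (exists a : profile R n m, pure_NE mu s0 lam a) /\
  (forall (sched : nat -> 'I_n) (x : nat -> profile R n m),
     BR_dynamics mu s0 lam sched x ->
     exists astar : profile R n m,
       pure_NE mu s0 lam astar /\
       forall i j, (fun t => x t i j) @ \oo --> astar i j).
Proof.
split; first by exists (potential mu s0 lam); exact: potential_exact.
split.
  have [a [a_feas a_settled]] := exists_settled_profile s0 hmu hlam hm.
  by exists a; exact: settled_pure_NE.
move=> sched x x_dyn; exists (x n); split.
  have [xn_feas xn_settled] := BR_dynamics_settled hmu hlam x_dyn n.
  by apply: settled_pure_NE => // k; exact: xn_settled.
move=> i j; apply: cvg_near_cst; exists n => // t /= le_nt.
by rewrite (BR_dynamics_stationary hmu hlam x_dyn le_nt).
Qed.
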